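(* Let $V$ and $W$ be graded vector spaces, let $d_V$ be a degree-one derivation of $TV$ and $d_W$ a degree-one derivation of $TW$, and let $V\#W$ be a graded vector space with a linear isomorphism $V\otimes W\to V\#W$, $v\otimes w\mapsto v\#w$, with $|v\#w|=|v|+|w|-1$. Extend $\#$ by the formulas $$(v_1\cdots v_k)\#'w=\sum_{i=1}^k(-1)^{a_i}v_1\cdots v_{i-1}(v_i\#w)v_{i+1}\cdots v_k,\quad a_i=|v_1|+\dots+|v_{i-1}|+|w|(|v_{i+1}|+\dots+|v_k|),$$ $$v\#(w_1\cdots w_l)=\sum_{j=1}^l(-1)^{b_j}w_1\cdots w_{j-1}(v\#w_j)w_{j+1}\cdots w_l,\quad b_j=(|v|+1)(|w_1|+\dots+|w_{j-1}|),$$ for $v,v_i\in V$, $w,w_j\in W$ (extended linearly, and equal to $0$ on scalars). Let $D_0$ be the derivation of degree $1$ of $T(V\oplus W\oplus V\#W)$ defined by $D_0v=d_Vv$, $D_0w=d_Ww$ and $$D_0(v\#w)=v\cdot w-(-1)^{|v||w|}w\cdot v-(D_0v)\#'w-(-1)^{|v|}v\#(D_0w).$$ Then for all $v\in V$, $w\in W$, $a\in TV$, $b\in TW$: 1. $D_0(a\#'w)=a\cdot w-(-1)^{|a||w|}w\cdot a-(D_0a)\#'w-(-1)^{|a|}a\#'D_0w$; 2. $D_0(v\#b)=v\,b-(-1)^{|v||b|}b\,v-(D_0v)\#b-(-1)^{|v|}v\#D_0b$.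
   Context: $TU$ denotes the tensor algebra on a graded vector space $U$; a derivation $D$ of degree $1$ satisfies $D(xy)=D(x)y+(-1)^{|x|}xD(y)$. In the expressions $a\#'D_0w$ with $a\in TV$ and $D_0w\in TW$, and similarly elsewhere, $\#'$ and $\#$ are extended bilinearly by the displayed formulas (for a word $a$ and a word $b$, $a\#'b$ expands first in the second argument via the second formula); the paper states the identity for $a\in TV$ with $w\in W$ and for $v\in V$ with $b\in TW$.
   Formalization: For words a, b, a#'b is the first displayed formula with w replaced by b, each vᵢ#b expanded by the second, not expanded first in b; a#b is the second with v replaced by a. The paper assumes this as well. *)

(* the tensor algebra T(U) on a graded vector space U with a
   homogeneous basis indexed by a choiceType is the free associative algebra
   {malg K[{fmonom U}]} of the multinomials library. *)
From HB Require Import structures.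
From mathcomp Require Import all_boot all_order all_algebra.
From mathcomp Require Import finmap.
From mathcomp.multinomials Require Import monalg.

Set Implicit Arguments.
Unset Strict Implicit.
Unset Printing Implicit Defensive.

Import GRing.Theory Num.Theory.
Local Open Scope ring_scope.

Section Sharp.
Variables (K : fieldType) (I J : choiceType) (degV : I -> int) (degW : J -> int).

(* Basis letters of V ⊕ W ⊕ V#W : inl (inl i) = e_i ∈ V, inl (inr j) = f_j ∈ W,
   inr (i, j) = e_i # f_j ∈ V#W. *)
Definition letter := ((I + J) + (I * J))%type.

Definition tens := {malg K[{fmonom letter}]}.

Definition ldeg (u : letter) : int :=
  match u with
  | inl (inl i) => degV i
  | inl (inr j) => degW j
  | inr (i, j) => degV i + degW j - 1
  end.

Definition wdeg (s : seq letter) : int := \sum_(u <- s) ldeg u.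

Definition sgn (n : int) : K := (-1) ^ n.

Definition isVl (u : letter) : bool := if u is inl (inl _) then true else false.
Definition isWl (u : letter) : bool := if u is inl (inr _) then true else false.

Definition wrd (s : seq letter) : tens := << FMonom s >>.

Definition homog (n : int) (x : tens) : Prop :=
  forall m : {fmonom letter}, wdeg m != n -> x@_m = 0.

Definition inTV (x : tens) : Prop :=
  forall m : {fmonom letter}, ~~ all isVl m -> x@_m = 0.
Definition inTW (x : tens) : Prop :=
  forall m : {fmonom letter}, ~~ all isWl m -> x@_m = 0.

Definition inV (x : tens) : Prop :=
  forall m : {fmonom letter}, (size m != 1%N) || ~~ all isVl m -> x@_m = 0.
Definition inW (x : tens) : Prop :=
  forall m : {fmonom letter}, (size m != 1%N) || ~~ all isWl m -> x@_m = 0.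

(* Extension of # to words.  For a word a = v_1...v_k of V-letters and a word
   b = w_1...w_l of W-letters:

   a #' b  is the first displayed formula with w replaced by b (sign
          a_i = |v_1|+...+|v_{i-1}| + |b|(|v_{i+1}|+...+|v_k|)), the inner
          v_i # b being expanded by the second displayed formula;
   a #  b  is the second displayed formula with v replaced by a (sign
          b_j = (|a|+1)(|w_1|+...+|w_{j-1}|)), the inner a #' w_j being
          expanded by the first displayed formula.

   When k = 1 or l = 1 both are exactly the displayed formulas, and both
   vanish when a or b is the empty word (scalars). *)
Definition sharpwL (a b : seq letter) : tens :=
  \sum_(i < size a) \sum_(j < size b)
    match onth a i, onth b j with
    | Some (inl (inl iv)), Some (inl (inr jw)) =>
        sgn (wdeg (take i a) + wdeg b * wdeg (drop i.+1 a)
             + (degV iv + 1) * wdeg (take j b))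
        *: wrd (take i a ++ take j b ++ inr (iv, jw) :: drop j.+1 b ++ drop i.+1 a)
    | _, _ => 0
    end.

Definition sharpwR (a b : seq letter) : tens :=
  \sum_(j < size b) \sum_(i < size a)
    match onth a i, onth b j with
    | Some (inl (inl iv)), Some (inl (inr jw)) =>
        sgn ((wdeg a + 1) * wdeg (take j b)
             + (wdeg (take i a) + degW jw * wdeg (drop i.+1 a)))
        *: wrd (take j b ++ take i a ++ inr (iv, jw) :: drop i.+1 a ++ drop j.+1 b)
    | _, _ => 0
    end.

Definition sharpL (x y : tens) : tens :=
  \sum_(m1 <- msupp x) \sum_(m2 <- msupp y) (x@_m1 * y@_m2) *: sharpwL m1 m2.
Definition sharpR (x y : tens) : tens :=
  \sum_(m1 <- msupp x) \sum_(m2 <- msupp y) (x@_m1 * y@_m2) *: sharpwR m1 m2.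

Definition is_deriv1 (D : tens -> tens) : Prop :=
  [/\ forall (c : K) (x y : tens), D (c *: x + y) = c *: D x + D y,
      forall (n : int) (x y : tens), homog n x -> D (x * y) = D x * y + sgn n *: (x * D y)
    & forall (n : int) (x : tens), homog n x -> homog (n + 1) (D x)].

Definition is_deriv1_on (P : tens -> Prop) (d : tens -> tens) : Prop :=
  [/\ forall x, P x -> P (d x),
      forall (c : K) (x y : tens), P x -> P y -> d (c *: x + y) = c *: d x + d y,
      forall (n : int) (x y : tens), P x -> P y -> homog n x ->
        d (x * y) = d x * y + sgn n *: (x * d y)
    & forall (n : int) (x : tens), P x -> homog n x -> homog (n + 1) (d x)].

End Sharp.

From Pilot Require Import Defs.
From HB Require Import structures.
From mathcomp Require Import all_boot all_order all_algebra.
From mathcomp Require Import finmap.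
From mathcomp.multinomials Require Import monalg.
From mathcomp Require Import ring.
Import GRing.Theory.
Local Open Scope ring_scope.

Set Implicit Arguments.
Unset Strict Implicit.
Unset Printing Implicit Defensive.

(* The identity for a single letter v (resp. w) is the defining formula of
   D0 on v#w, because there #' and # coincide.  The letters of a word are then
   peeled off one at a time: #' is a twisted derivation in its first argument,
     (xy)#'b = (-1)^(|b||y|) (x#'b) y + (-1)^|x| x (y#'b),
   and # is one in its second argument,
     a#(yz) = (a#y) z + (-1)^((|a|+1)|y|) y (a#z),
   so, D0 being a derivation, the set of homogeneous a (resp. b) satisfying the
   identity is closed under products.  Both sides being linear in a (resp. b),
   the identity extends from words to all of TV (resp. TW). *)

(* The square-zero extension R + V is a commutative ring into which V embeds
   additively, scalars acting by multiplication: [module_ring] decides linear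
   identities in an R-module with [ring]. *)
Section SquareZeroExtension.
Variables (R : comNzRingType) (V : lmodType R).

Definition sqz := (R * V)%type.
HB.instance Definition _ := GRing.Zmodule.on sqz.

Definition sqz_mul (a b : sqz) : sqz := (a.1 * b.1, a.1 *: b.2 + b.1 *: a.2).

Lemma sqz_mulA : associative sqz_mul.
Proof.
move=> [a u] [b v] [c w]; rewrite /sqz_mul /= mulrA; congr pair.
by rewrite !scalerDr !scalerA [c * a]mulrC [c * b]mulrC addrA.
Qed.
Lemma sqz_mulC : commutative sqz_mul.
Proof. by move=> [a u] [b v]; rewrite /sqz_mul /= mulrC addrC. Qed.
Lemma sqz_mul1 : left_id (1, 0) sqz_mul.
Proof. by move=> [a u]; rewrite /sqz_mul /= mul1r scale1r scaler0 addr0. Qed.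
Lemma sqz_mulDl : left_distributive sqz_mul +%R.
Proof.
move=> [a u] [b v] [c w]; rewrite /sqz_mul /= mulrDl scalerDl scalerDr.
by congr pair; rewrite addrACA.
Qed.
Lemma sqz_one_neq0 : (1, 0) != 0 :> sqz.
Proof. by apply/eqP => -[/eqP]; rewrite oner_eq0. Qed.

HB.instance Definition _ :=
  GRing.Zmodule_isComNzRing.Build sqz sqz_mulA sqz_mulC sqz_mul1 sqz_mulDl sqz_one_neq0.

Definition sqz_scal (c : R) : sqz := (c, 0).
Definition sqz_vec (v : V) : sqz := (0, v).

Lemma sqz_scal1 : sqz_scal 1 = 1. Proof. by []. Qed.
Lemma sqz_scalN c : sqz_scal (- c) = - sqz_scal c.
Proof. by rewrite /sqz_scal; congr pair; rewrite oppr0. Qed.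
Lemma sqz_scalM a b : sqz_scal (a * b) = sqz_scal a * sqz_scal b.
Proof. by rewrite /sqz_scal /GRing.mul /= /sqz_mul /= !scaler0 addr0. Qed.

Lemma sqz_vecD u v : sqz_vec (u + v) = sqz_vec u + sqz_vec v.
Proof. by rewrite /sqz_vec; congr pair; rewrite addr0. Qed.
Lemma sqz_vecN v : sqz_vec (- v) = - sqz_vec v.
Proof. by rewrite /sqz_vec; congr pair; rewrite oppr0. Qed.
Lemma sqz_vec0 : sqz_vec 0 = 0. Proof. by []. Qed.
Lemma sqz_vec_inj : injective sqz_vec. Proof. by move=> u v []. Qed.
Lemma sqz_vecZ c v : sqz_vec (c *: v) = sqz_scal c * sqz_vec v.
Proof. by rewrite /sqz_vec /sqz_scal /GRing.mul /= /sqz_mul /= mulr0 scaler0 addr0. Qed.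

End SquareZeroExtension.

Lemma mulrZl (R : pzRingType) (A : lalgType R) (a : R) (x y : A) :
  (a *: x) * y = a *: (x * y).
Proof. by rewrite scalerAl. Qed.
Lemma mulrZr (R : pzRingType) (A : algType R) (a : R) (x y : A) :
  x * (a *: y) = a *: (x * y).
Proof. by rewrite scalerAr. Qed.

Ltac alg_expand := rewrite ?(mulrDl, mulrDr, mulrBl, mulrBr, mulNr, mulrN,
  mul0r, mulr0, mulr1, mul1r, scalerDr, scalerBr, scalerN, scaler0, scale0r,
  mulrZl, mulrZr, mulrA, scalerA).

Ltac module_ring := apply: sqz_vec_inj;
  rewrite ?(sqz_vecD, sqz_vecN, sqz_vecZ, sqz_vec0, sqz_scalM, sqz_scalN, sqz_scal1);
  ring.

Section Signs.
Variable K : fieldType.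
Local Notation sgn := (sgn K).

Lemma sgnD m n : sgn (m + n) = sgn m * sgn n.
Proof. by rewrite /sgn expfzDr // oppr_eq0 oner_eq0. Qed.
Lemma sgn0 : sgn 0 = 1. Proof. by []. Qed.
Lemma sgn1 : sgn 1 = -1. Proof. by []. Qed.
Lemma sgnN1 : sgn (-1) = -1.
Proof. by rewrite /sgn -exprz_inv invrN1. Qed.

Lemma sgn_pm1 n : sgn n = 1 \/ sgn n = -1.
Proof.
suff pm1 k : (-1 : K) ^+ k = 1 \/ (-1 : K) ^+ k = -1.
  by case: n => k; rewrite /sgn ?NegzE -?exprz_inv ?invrN1; apply: pm1.
by rewrite -signr_odd; case: (odd k); [right | left].
Qed.

End Signs.

Ltac sgn_expand := rewrite ?(sgnD, sgnN1, sgn1, sgn0).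

Section WordSharp.
Variables (K : fieldType) (I J : choiceType) (degV : I -> int) (degW : J -> int).
Variables (A : algType K) (wr : seq (letter I J) -> A).
Hypothesis wr_cat : forall s t, wr (s ++ t) = wr s * wr t.
Hypothesis wr_nil : wr [::] = 1.
Local Notation wdeg := (wdeg degV degW).
Local Notation ldeg := (ldeg degV degW).
Local Notation sgn := (sgn K).

Lemma wdeg_cat s t : wdeg (s ++ t) = wdeg s + wdeg t.
Proof. by rewrite /Defs.wdeg big_cat. Qed.
Lemma wdeg_nil : wdeg [::] = 0.
Proof. by rewrite /Defs.wdeg big_nil. Qed.
Lemma wdeg_cons l s : wdeg (l :: s) = ldeg l + wdeg s.
Proof. by rewrite /Defs.wdeg big_cons. Qed.
Lemma wdeg1 l : wdeg [:: l] = ldeg l.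
Proof. by rewrite wdeg_cons wdeg_nil addr0. Qed.

Lemma wr_cons l s : wr (l :: s) = wr [:: l] * wr s.
Proof. exact: (wr_cat [:: l] s). Qed.

(* [sharpwL] and [sharpwR] of Defs, with the words evaluated by [wr] in an
   abstract algebra [A]: keeping the sign computations away from the concrete
   type of [tens], whose unfolding makes rewriting and [ring] intractable. *)
Definition wsharpL (a b : seq (letter I J)) : A :=
  \sum_(i < size a) \sum_(j < size b)
    match onth a i, onth b j with
    | Some (inl (inl iv)), Some (inl (inr jw)) =>
        sgn (wdeg (take i a) + wdeg b * wdeg (drop i.+1 a)
             + (degV iv + 1) * wdeg (take j b))
        *: wr (take i a ++ take j b ++ inr (iv, jw) :: drop j.+1 b ++ drop i.+1 a)
    | _, _ => 0
    end.

Definition wsharpR (a b : seq (letter I J)) : A :=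
  \sum_(j < size b) \sum_(i < size a)
    match onth a i, onth b j with
    | Some (inl (inl iv)), Some (inl (inr jw)) =>
        sgn ((wdeg a + 1) * wdeg (take j b)
             + (wdeg (take i a) + degW jw * wdeg (drop i.+1 a)))
        *: wr (take j b ++ take i a ++ inr (iv, jw) :: drop i.+1 a ++ drop j.+1 b)
    | _, _ => 0
    end.

Lemma wsharpL_nil t : wsharpL [::] t = 0.
Proof. by rewrite /wsharpL big_ord0. Qed.
Lemma wsharpR_nil s : wsharpR s [::] = 0.
Proof. by rewrite /wsharpR big_ord0. Qed.

Lemma wsharpL_cons l s t :
  wsharpL (l :: s) t = sgn (wdeg t * wdeg s) *: (wsharpL [:: l] t * wr s)
                       + sgn (ldeg l) *: (wr [:: l] * wsharpL s t).
Proof.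
rewrite /wsharpL big_ord_recl big_ord1; congr (_ + _).
  rewrite [_ * wr s]mulr_suml scaler_sumr; apply: eq_bigr => j _.
  case: l => [[iv|jw]|[iv jw]] /=; try by rewrite mul0r scaler0.
  case: (onth t j) => [[[iv'|jw']|[iv' jw']]|]; try by rewrite mul0r scaler0.
  by rewrite mulrZl scalerA -sgnD drop0 cats0 wdeg_nil mulr0 !add0r -wr_cat -catA.
rewrite [wr [:: l] * _]mulr_sumr scaler_sumr; apply: eq_bigr => i _.
rewrite [wr [:: l] * _]mulr_sumr scaler_sumr; apply: eq_bigr => j _; rewrite lift0 /=.
case: (onth s i) => [[[iv|jw]|[iv jw]]|]; try by rewrite mulr0 scaler0.
case: (onth t j) => [[[iv'|jw']|[iv' jw']]|]; try by rewrite mulr0 scaler0.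
by rewrite mulrZr scalerA -sgnD -wr_cat wdeg_cons /= !addrA.
Qed.

Lemma wsharpR_cons s l t :
  wsharpR s (l :: t) = wsharpR s [:: l] * wr t
                       + sgn ((wdeg s + 1) * ldeg l) *: (wr [:: l] * wsharpR s t).
Proof.
rewrite /wsharpR big_ord_recl big_ord1; congr (_ + _).
  rewrite [_ * wr t]mulr_suml; apply: eq_bigr => i _ /=.
  case: (onth s i) => [[[iv|jw]|[iv jw]]|]; try by rewrite mul0r.
  case: l => [[iv'|jw']|[iv' jw']]; try by rewrite mul0r.
  by rewrite drop0 cats0 mulrZl -wr_cat -catA.
rewrite [wr [:: l] * _]mulr_sumr scaler_sumr; apply: eq_bigr => j _.
rewrite [wr [:: l] * _]mulr_sumr scaler_sumr; apply: eq_bigr => i _; rewrite lift0 /=.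
case: (onth s i) => [[[iv|jw]|[iv jw]]|]; try by rewrite mulr0 scaler0.
case: (onth t j) => [[[iv'|jw']|[iv' jw']]|]; try by rewrite mulr0 scaler0.
by rewrite mulrZr scalerA -sgnD -wr_cat wdeg_cons mulrDr -addrA.
Qed.

Lemma wsharpL_cat s1 s2 t :
  wsharpL (s1 ++ s2) t = sgn (wdeg t * wdeg s2) *: (wsharpL s1 t * wr s2)
                         + sgn (wdeg s1) *: (wr s1 * wsharpL s2 t).
Proof.
elim: s1 => [|l s1 IH].
  by rewrite wsharpL_nil mul0r scaler0 add0r wdeg_nil sgn0 scale1r wr_nil mul1r.
rewrite cat_cons wsharpL_cons IH (wsharpL_cons l s1) (wr_cons l s1) wr_cat.
rewrite !wdeg_cat wdeg_cons; alg_expand; sgn_expand; module_ring.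
Qed.

Lemma wsharpR_cat s t1 t2 :
  wsharpR s (t1 ++ t2) = wsharpR s t1 * wr t2
                         + sgn ((wdeg s + 1) * wdeg t1) *: (wr t1 * wsharpR s t2).
Proof.
elim: t1 => [|l t1 IH].
  by rewrite wsharpR_nil mul0r add0r wdeg_nil mulr0 sgn0 scale1r wr_nil mul1r.
rewrite cat_cons wsharpR_cons IH (wsharpR_cons s l t1) (wr_cons l t1) wr_cat.
rewrite wdeg_cons; alg_expand; sgn_expand; module_ring.
Qed.

Lemma wsharpL_letter l t : wsharpL [:: l] t = wsharpR [:: l] t.
Proof.
rewrite /wsharpL /wsharpR big_ord1; apply: eq_bigr => j _; rewrite big_ord1 /=.
case: l => [[iv|jw]|[iv jw]] //; case: (onth t j) => [[[iv'|jw']|[iv' jw']]|] //.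
by rewrite wdeg_nil wdeg1 cats0 /=; congr (sgn _ *: _); ring.
Qed.

Lemma wsharpR_letter s l : wsharpL s [:: l] = wsharpR s [:: l].
Proof.
rewrite /wsharpL /wsharpR big_ord1; apply: eq_bigr => i _; rewrite big_ord1 /=.
case: (onth s i) => [[[iv|jw]|[iv jw]]|] //; case: l => [[iv'|jw']|[iv' jw']] //.
by rewrite wdeg_nil wdeg1 cats0 /=; congr (sgn _ *: _); ring.
Qed.

End WordSharp.

Section LinearFunctions.
Variables (R : comPzRingType) (U V : lmodType R).
Implicit Types (f g : U -> V).

Lemma linear_fun0 f : linear f -> f 0 = 0.
Proof. by move=> f_lin; rewrite -[0]subr0 (zmod_morphism_linear f_lin) subrr. Qed.
Lemma linear_funD f : linear f -> {morph f : x y / x + y}.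
Proof. by move=> f_lin x y; have := f_lin 1 x y; rewrite !scale1r. Qed.
Lemma linear_fun_sum f (T : Type) (r : seq T) (c : T -> R) (F : T -> U) :
  linear f -> f (\sum_(i <- r) c i *: F i) = \sum_(i <- r) c i *: f (F i).
Proof.
move=> f_lin; elim: r => [|i r IH]; first by rewrite !big_nil linear_fun0.
by rewrite !big_cons f_lin IH.
Qed.

Lemma linear_comp (W : lmodType R) (f : V -> W) (g : U -> V) :
  linear f -> linear g -> linear (fun x => f (g x)).
Proof. by move=> f_lin g_lin c x y; rewrite g_lin f_lin. Qed.
Lemma linear_add f g : linear f -> linear g -> linear (fun x => f x + g x).
Proof. by move=> f_lin g_lin c x y; rewrite f_lin g_lin scalerDr addrACA. Qed.
Lemma linear_sub f g : linear f -> linear g -> linear (fun x => f x - g x).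
Proof.
by move=> f_lin g_lin c x y; rewrite f_lin g_lin scalerBr opprD addrACA.
Qed.
Lemma linear_scale a f : linear f -> linear (fun x => a *: f x).
Proof. by move=> f_lin c x y; rewrite f_lin scalerDr !scalerA mulrC. Qed.

End LinearFunctions.

Lemma linear_mull (R : comPzRingType) (A : lalgType R) (y : A) :
  linear (fun x : A => x * y).
Proof. by move=> c u v; rewrite mulrDl mulrZl. Qed.
Lemma linear_mulr (R : comPzRingType) (A : algType R) (y : A) :
  linear (fun x : A => y * x).
Proof. by move=> c u v; rewrite mulrDr mulrZr. Qed.

Section TwistedDerivation.
Variables (K : fieldType) (A : algType K) (hom : int -> A -> Prop) (D : A -> A).
Local Notation sgn := (sgn K).
Hypothesis hom1 : hom 0 1.
Hypothesis D_linear : linear D.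
Hypothesis D_leibniz : forall n x y, hom n x -> D (x * y) = D x * y + sgn n *: (x * D y).
Hypothesis D_hom : forall n x, hom n x -> hom (n + 1) (D x).

Lemma derivation1 : D 1 = 0.
Proof.
have := D_leibniz 1 hom1; rewrite !mulr1 mul1r sgn0 scale1r.
by rewrite -{1}[D 1]addr0 => /addrI <-.
Qed.

Section LeftSharp.
Variable sL : A -> A -> A.
Hypothesis sL_linear : forall b, linear (sL ^~ b).
Hypothesis sL1 : forall b, sL 1 b = 0.
Hypothesis sL_hom : forall p q x b, hom p x -> hom q b -> hom (p + q - 1) (sL x b).
Hypothesis sL_mul : forall p q r x y b, hom p x -> hom r y -> hom q b ->
  sL (x * y) b = sgn (q * r) *: (sL x b * y) + sgn p *: (x * sL y b).
Variables (w : A) (q : int).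
Hypothesis w_hom : hom q w.

Definition sharpL_formula a p := D (sL a w) = a * w - sgn (p * q) *: (w * a)
  - sL (D a) w - sgn p *: sL a (D w).

Lemma sharpL_formula1 : sharpL_formula 1 0.
Proof.
rewrite /sharpL_formula derivation1 sL1 (linear_fun0 (sL_linear w)) sL1.
by rewrite (linear_fun0 D_linear) mul1r mulr1 mul0r sgn0 !scale1r subrr !subr0.
Qed.

Lemma sharpL_formulaM x y p r : hom p x -> hom r y ->
  sharpL_formula x p -> sharpL_formula y r -> sharpL_formula (x * y) (p + r).
Proof.
move=> x_hom y_hom x_formula y_formula; rewrite /sharpL_formula.
have sLD := linear_funD (sL_linear w); have sLZ := scalable_linear (sL_linear w).
rewrite (sL_mul x_hom y_hom w_hom) (linear_funD D_linear) !(scalable_linear D_linear).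
rewrite (D_leibniz _ (sL_hom x_hom w_hom)) (D_leibniz _ x_hom) x_formula y_formula.
rewrite (D_leibniz _ x_hom) sLD sLZ (sL_mul (D_hom x_hom) y_hom w_hom).
rewrite (sL_mul x_hom (D_hom y_hom) w_hom) (sL_mul x_hom y_hom (D_hom w_hom)).
alg_expand; rewrite (mulrC r q); sgn_expand.
(* What remains needs sgn p ^+ 2 = 1 and sgn r ^+ 2 = 1, invisible to [ring]. *)
by have [->|->] := sgn_pm1 K p; have [->|->] := sgn_pm1 K r; module_ring.
Qed.

End LeftSharp.

Section RightSharp.
Variable sR : A -> A -> A.
Hypothesis sR_linear : forall a, linear (sR a).
Hypothesis sR1 : forall a, sR a 1 = 0.
Hypothesis sR_hom : forall p q a y, hom p a -> hom q y -> hom (p + q - 1) (sR a y).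
Hypothesis sR_mul : forall p r a y z, hom p a -> hom r y ->
  sR a (y * z) = sR a y * z + sgn ((p + 1) * r) *: (y * sR a z).
Variables (v : A) (p : int).
Hypothesis v_hom : hom p v.

Definition sharpR_formula b q := D (sR v b) = v * b - sgn (p * q) *: (b * v)
  - sR (D v) b - sgn p *: sR v (D b).

Lemma sharpR_formula1 : sharpR_formula 1 0.
Proof.
rewrite /sharpR_formula derivation1 sR1 (linear_fun0 (sR_linear v)) sR1.
rewrite (linear_fun0 D_linear) mulr1 mul1r mulr0 sgn0 scale1r scaler0.
by rewrite subrr !subr0.
Qed.

Lemma sharpR_formulaM y z r s : hom r y -> hom s z ->
  sharpR_formula y r -> sharpR_formula z s -> sharpR_formula (y * z) (r + s).
Proof.
move=> y_hom z_hom y_formula z_formula; rewrite /sharpR_formula.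
have sRD := linear_funD (sR_linear v); have sRZ := scalable_linear (sR_linear v).
rewrite (sR_mul _ v_hom y_hom) (linear_funD D_linear) (scalable_linear D_linear).
rewrite (D_leibniz _ (sR_hom v_hom y_hom)) (D_leibniz _ y_hom) y_formula z_formula.
rewrite (sR_mul _ (D_hom v_hom) y_hom) (D_leibniz _ y_hom) sRD sRZ.
rewrite (sR_mul _ v_hom (D_hom y_hom)) (sR_mul _ v_hom y_hom).
alg_expand; sgn_expand.
by have [->|->] := sgn_pm1 K p; have [->|->] := sgn_pm1 K r; module_ring.
Qed.

End RightSharp.

End TwistedDerivation.

Section TensorAlgebra.
Variables (K : fieldType) (I J : choiceType) (degV : I -> int) (degW : J -> int).
Local Notation tens := (tens K I J).
Local Notation letter := (letter I J).
Local Notation wrd := (@wrd K I J).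
Local Notation wdeg := (wdeg degV degW).
Local Notation ldeg := (ldeg degV degW).
Local Notation sgn := (sgn K).
Local Notation hom := (@homog K I J degV degW).
Local Notation sL := (sharpL degV degW).
Local Notation sR := (sharpR degV degW).

Lemma tens_scalerAr (c : K) (x y : tens) : c *: (x * y) = x * (c *: y).
Proof.
have malgC_central : x * c%:MP = c%:MP * x.
  rewrite mul_malgC malgM_def fgmulgU malgZ_def /fgscale.
  by apply: eq_bigr => k _; rewrite mulrC mulm1.
by rewrite -!mul_malgC mulrA -malgC_central mulrA.
Qed.

HB.instance Definition _ := GRing.Lalgebra.on tens.
HB.instance Definition _ := GRing.Lalgebra_isAlgebra.Build K tens tens_scalerAr.

Lemma wrd_cat s t : wrd (s ++ t) = wrd s * wrd t.
Proof.
rewrite /Defs.wrd malgM_def fgmulUU mulr1; congr << _ >>.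
by apply: val_inj; rewrite /= fmM.
Qed.
Lemma wrd_nil : wrd [::] = 1.
Proof. by rewrite /Defs.wrd; congr << _ >>; apply: val_inj; rewrite /= fm1. Qed.

Lemma wrd_coef s (m : {fmonom letter}) : (wrd s)@_m = (FMonom s == m)%:R.
Proof. by rewrite /Defs.wrd mcoeffU. Qed.

Lemma sharpwLE : sharpwL K degV degW = wsharpL degV degW wrd.
Proof. by []. Qed.
Lemma sharpwRE : sharpwR K degV degW = wsharpR degV degW wrd.
Proof. by []. Qed.

Definition linw (f : seq letter -> tens) (x : tens) : tens :=
  \sum_(m <- msupp x) x@_m *: f m.

Lemma linwEw f (d : {fset {fmonom letter}}) x : (msupp x `<=` d)%fset ->
  linw f x = \sum_(m <- d) x@_m *: f m.
Proof.
move=> le_xd; rewrite /linw (big_fset_incl _ le_xd) //= => m _ /mcoeff_outdom ->.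
by rewrite scale0r.
Qed.

Lemma linear_linw f : linear (linw f).
Proof.
move=> c x y; set d := (msupp x `|` msupp y)%fset.
rewrite (@linwEw f d) ?(@linwEw f d x) ?(@linwEw f d y) ?fsubsetUl ?fsubsetUr //.
  rewrite scaler_sumr -big_split /=; apply: eq_bigr => m _.
  by rewrite mcoeffD mcoeffZ scalerDl scalerA.
by apply: fsubset_trans (msuppD_le _ _) _; apply: fsetSU; exact: msuppZ_le.
Qed.

Lemma linw_wrd f s : linw f (wrd s) = f s.
Proof. by rewrite /linw /Defs.wrd msuppU1 big_seq_fset1 mcoeffUU scale1r. Qed.

Lemma linw_wrd_id x : linw wrd x = x.
Proof.
rewrite [RHS]monalgE; apply: eq_bigr => m _.
by apply/malgP => m'; rewrite mcoeffZ !mcoeffU mulr_natr fmK.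
Qed.

Lemma eq_linw f g x : f =1 g -> linw f x = linw g x.
Proof. by move=> eq_fg; apply: eq_bigr => m _; rewrite eq_fg. Qed.

Lemma linwZD f g c x : linw (fun s => c *: f s + g s) x = c *: linw f x + linw g x.
Proof.
rewrite /linw scaler_sumr -big_split /=; apply: eq_bigr => m _.
by rewrite scalerDr !scalerA mulrC.
Qed.

Lemma linw0 x : linw (fun _ => 0) x = 0.
Proof. by rewrite /linw big1 // => m _; rewrite scaler0. Qed.

Lemma linear_wrd_eq (F G : tens -> tens) (P : pred (seq letter)) x :
  linear F -> linear G -> (forall s, P s -> F (wrd s) = G (wrd s)) ->
  (forall m : {fmonom letter}, ~~ P m -> x@_m = 0) -> F x = G x.
Proof.
move=> F_lin G_lin eqFG x_supp; rewrite -[x]linw_wrd_id /linw.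
rewrite (linear_fun_sum _ _ _ F_lin) (linear_fun_sum _ _ _ G_lin).
apply: eq_big_seq => m; rewrite -mcoeff_neq0 => xm_neq0.
by rewrite eqFG //; apply: contraNT xm_neq0 => /x_supp ->.
Qed.

Lemma sharpL_linw x y : sL x y = linw (fun s => linw (sharpwL K degV degW s) y) x.
Proof.
rewrite /sharpL /linw; apply: eq_bigr => m1 _.
by rewrite scaler_sumr; apply: eq_bigr => m2 _; rewrite scalerA.
Qed.
Lemma sharpR_linw x y : sR x y = linw (fun s => linw (sharpwR K degV degW s) y) x.
Proof.
rewrite /sharpR /linw; apply: eq_bigr => m1 _.
by rewrite scaler_sumr; apply: eq_bigr => m2 _; rewrite scalerA.
Qed.

Lemma linear_sharpL_l b : linear (sL ^~ b).
Proof. by move=> c x y; rewrite !sharpL_linw linear_linw. Qed.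
Lemma linear_sharpL_r a : linear (sL a).
Proof.
by move=> c x y; rewrite !sharpL_linw -linwZD; apply: eq_linw => s; apply: linear_linw.
Qed.
Lemma linear_sharpR_l b : linear (sR ^~ b).
Proof. by move=> c x y; rewrite !sharpR_linw linear_linw. Qed.
Lemma linear_sharpR_r a : linear (sR a).
Proof.
by move=> c x y; rewrite !sharpR_linw -linwZD; apply: eq_linw => s; apply: linear_linw.
Qed.

Lemma sharpL_wrd s t : sL (wrd s) (wrd t) = sharpwL K degV degW s t.
Proof. by rewrite sharpL_linw !linw_wrd. Qed.
Lemma sharpR_wrd s t : sR (wrd s) (wrd t) = sharpwR K degV degW s t.
Proof. by rewrite sharpR_linw !linw_wrd. Qed.

Lemma homog0 n : hom n 0.
Proof. by move=> m _; rewrite mcoeff0. Qed.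
Lemma homogD n x y : hom n x -> hom n y -> hom n (x + y).
Proof. by move=> hx hy m hm; rewrite mcoeffD hx ?hy ?addr0. Qed.
Lemma homogZ n c x : hom n x -> hom n (c *: x).
Proof. by move=> hx m hm; rewrite mcoeffZ hx ?mulr0. Qed.
Lemma homog_sum n (T : Type) (r : seq T) (P : pred T) (F : T -> tens) :
  (forall i, P i -> hom n (F i)) -> hom n (\sum_(i <- r | P i) F i).
Proof. by move=> hF; apply: (big_ind (hom n)); [exact: homog0|exact: homogD|]. Qed.
Lemma homog_wrd n s : wdeg s = n -> hom n (wrd s).
Proof.
by move=> <- m; rewrite wrd_coef; case: (FMonom s =P m) => [<-|_ _ //]; rewrite eqxx.
Qed.
Lemma homog1 : hom 0 1.
Proof. by rewrite -wrd_nil; apply: homog_wrd; rewrite wdeg_nil. Qed.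
Lemma homog_supp n x m : hom n x -> m \in msupp x -> wdeg m = n.
Proof.
by move=> hx; rewrite -mcoeff_neq0; apply: contraNeq => /(hx m) ->; rewrite eqxx.
Qed.
Lemma homog_linw n (f : seq letter -> tens) (x : tens) :
  (forall m : {fmonom letter}, m \in msupp x -> hom n (f m)) -> hom n (linw f x).
Proof. by move=> hf; rewrite /linw big_seq; apply: homog_sum => m /hf /homogZ. Qed.

Lemma wdeg_onth (s : seq letter) i l : onth s i = Some l ->
  wdeg s = wdeg (take i s) + ldeg l + wdeg (drop i.+1 s).
Proof.
move=> sil; have ltis : (i < size s)%N by rewrite -onthTE sil.
rewrite -{1}(cat_take_drop i s) (drop_nth l ltis) (@onth_nth _ l l s i sil).
by rewrite wdeg_cat wdeg_cons addrA.
Qed.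

Lemma homog_sharpwL a b : hom (wdeg a + wdeg b - 1) (sharpwL K degV degW a b).
Proof.
apply: homog_sum => i _; apply: homog_sum => j _.
case ai: (onth a i) => [[[iv|jw]|[iv jw]]|]; try exact: homog0.
case bj: (onth b j) => [[[iv'|jw']|[iv' jw']]|]; try exact: homog0.
apply/homogZ/homog_wrd; rewrite (wdeg_onth ai) (wdeg_onth bj).
by rewrite !(wdeg_cat, wdeg_cons) /=; ring.
Qed.

Lemma homog_sharpwR a b : hom (wdeg a + wdeg b - 1) (sharpwR K degV degW a b).
Proof.
apply: homog_sum => j _; apply: homog_sum => i _.
case ai: (onth a i) => [[[iv|jw]|[iv jw]]|]; try exact: homog0.
case bj: (onth b j) => [[[iv'|jw']|[iv' jw']]|]; try exact: homog0.
apply/homogZ/homog_wrd; rewrite (wdeg_onth ai) (wdeg_onth bj).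
by rewrite !(wdeg_cat, wdeg_cons) /=; ring.
Qed.

Lemma homog_sharpL p q x b : hom p x -> hom q b -> hom (p + q - 1) (sL x b).
Proof.
move=> hx hb; rewrite sharpL_linw; apply: homog_linw => m1 /(homog_supp hx) <-.
by apply: homog_linw => m2 /(homog_supp hb) <-; apply: homog_sharpwL.
Qed.
Lemma homog_sharpR p q x b : hom p x -> hom q b -> hom (p + q - 1) (sR x b).
Proof.
move=> hx hb; rewrite sharpR_linw; apply: homog_linw => m1 /(homog_supp hx) <-.
by apply: homog_linw => m2 /(homog_supp hb) <-; apply: homog_sharpwR.
Qed.

Lemma sharpLM p q r x y b : hom p x -> hom r y -> hom q b ->
  sL (x * y) b = sgn (q * r) *: (sL x b * y) + sgn p *: (x * sL y b).
Proof.
move=> hx hy hb.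
apply: (linear_wrd_eq (F := fun x => sL (x * y) b)
  (G := fun x => sgn (q * r) *: (sL x b * y) + sgn p *: (x * sL y b))
  (P := fun s => wdeg s == p)) hx.
- exact: linear_comp (linear_sharpL_l b) (linear_mull y).
- exact: linear_add (linear_scale _ (linear_comp (linear_mull y) (linear_sharpL_l b)))
                    (linear_scale _ (linear_mull _)).
move=> s /eqP <-.
apply: (linear_wrd_eq (F := fun y => sL (wrd s * y) b)
  (G := fun y => sgn (q * r) *: (sL (wrd s) b * y) + sgn (wdeg s) *: (wrd s * sL y b))
  (P := fun s => wdeg s == r)) hy.
- exact: linear_comp (linear_sharpL_l b) (linear_mulr (wrd s)).
- apply: linear_add (linear_scale _ (linear_mulr _)) _.
  exact: linear_scale _ (linear_comp (linear_mulr (wrd s)) (linear_sharpL_l b)).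
move=> t /eqP <-.
apply: (linear_wrd_eq (F := fun b => sL (wrd s * wrd t) b)
  (G := fun b => sgn (q * wdeg t) *: (sL (wrd s) b * wrd t)
                 + sgn (wdeg s) *: (wrd s * sL (wrd t) b))
  (P := fun s => wdeg s == q)) hb.
- exact: linear_sharpL_r.
- apply: linear_add.
    exact: linear_scale _ (linear_comp (linear_mull (wrd t)) (linear_sharpL_r (wrd s))).
  exact: linear_scale _ (linear_comp (linear_mulr (wrd s)) (linear_sharpL_r (wrd t))).
move=> u /eqP <-.
rewrite -wrd_cat !sharpL_wrd !sharpwLE.
by apply: wsharpL_cat; [exact: wrd_cat | exact: wrd_nil].
Qed.

Lemma sharpRM p r a y z : hom p a -> hom r y ->
  sR a (y * z) = sR a y * z + sgn ((p + 1) * r) *: (y * sR a z).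
Proof.
move=> ha hy.
apply: (linear_wrd_eq (F := fun a => sR a (y * z))
  (G := fun a => sR a y * z + sgn ((p + 1) * r) *: (y * sR a z))
  (P := fun s => wdeg s == p)) ha.
- exact: linear_sharpR_l.
- exact: linear_add (linear_comp (linear_mull z) (linear_sharpR_l y))
                    (linear_scale _ (linear_comp (linear_mulr y) (linear_sharpR_l z))).
move=> s /eqP <-.
apply: (linear_wrd_eq (F := fun y => sR (wrd s) (y * z))
  (G := fun y => sR (wrd s) y * z + sgn ((wdeg s + 1) * r) *: (y * sR (wrd s) z))
  (P := fun s => wdeg s == r)) hy.
- exact: linear_comp (linear_sharpR_r (wrd s)) (linear_mull z).
- exact: linear_add (linear_comp (linear_mull z) (linear_sharpR_r (wrd s)))
                    (linear_scale _ (linear_mull _)).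
move=> t /eqP <-.
apply: (linear_wrd_eq (F := fun z => sR (wrd s) (wrd t * z))
  (G := fun z => sR (wrd s) (wrd t) * z
                 + sgn ((wdeg s + 1) * wdeg t) *: (wrd t * sR (wrd s) z))
  (P := predT)) => //.
- exact: linear_comp (linear_sharpR_r (wrd s)) (linear_mulr (wrd t)).
- apply: linear_add (linear_mulr _) _.
  exact: linear_scale _ (linear_comp (linear_mulr (wrd t)) (linear_sharpR_r (wrd s))).
move=> u _.
rewrite -wrd_cat !sharpR_wrd !sharpwRE.
by apply: wsharpR_cat; [exact: wrd_cat | exact: wrd_nil].
Qed.

Lemma sharpL_letter l y : sL (wrd [:: l]) y = sR (wrd [:: l]) y.
Proof.
rewrite sharpL_linw sharpR_linw !linw_wrd; apply: eq_linw => t.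
by rewrite sharpwLE sharpwRE wsharpL_letter.
Qed.
Lemma sharpR_letter x l : sL x (wrd [:: l]) = sR x (wrd [:: l]).
Proof.
rewrite sharpL_linw sharpR_linw; apply: eq_linw => s.
by rewrite !linw_wrd sharpwLE sharpwRE wsharpR_letter.
Qed.

Lemma sharpL1 (y : tens) : sL 1 y = 0.
Proof.
rewrite -wrd_nil sharpL_linw linw_wrd -[RHS](linw0 y); apply: eq_linw => t.
by rewrite sharpwLE wsharpL_nil.
Qed.
Lemma sharpR1 (x : tens) : sR x 1 = 0.
Proof.
rewrite -wrd_nil sharpR_linw -[RHS](linw0 x); apply: eq_linw => s.
by rewrite linw_wrd sharpwRE wsharpR_nil.
Qed.

Section DerivationOnSharp.
Variable D0 : tens -> tens.
Hypothesis D0_linear : linear D0.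
Hypothesis D0_leibniz : forall n x y, hom n x -> D0 (x * y) = D0 x * y + sgn n *: (x * D0 y).
Hypothesis D0_hom : forall n x, hom n x -> hom (n + 1) (D0 x).
Hypothesis D0_sharp : forall p q v w, inV v -> hom p v -> inW w -> hom q w ->
  D0 (sR v w) = v * w - sgn (p * q) *: (w * v) - sL (D0 v) w - sgn p *: sR v (D0 w).

Lemma inV_letter i : inV (wrd [:: inl (inl i)]).
Proof. by move=> m; rewrite wrd_coef; case: (_ =P m) => [<-|_ _ //]. Qed.
Lemma inW_letter j : inW (wrd [:: inl (inr j)]).
Proof. by move=> m; rewrite wrd_coef; case: (_ =P m) => [<-|_ _ //]. Qed.

Lemma sharpL_formula_wrd w q s : inW w -> hom q w -> all (@isVl I J) s ->
  sharpL_formula D0 sL w q (wrd s) (wdeg s).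
Proof.
move=> hw hqw; elim: s => [_|l s IH /andP [Vl Vs]].
  (* Here and below the two sides differ only by the path to the ring structure
     of [tens] (through [algType] or not), so we close by conversion. *)
  rewrite wrd_nil wdeg_nil.
  exact (sharpL_formula1 homog1 D0_linear D0_leibniz linear_sharpL_l sharpL1 w q).
have base : sharpL_formula D0 sL w q (wrd [:: l]) (wdeg [:: l]).
  case: l Vl => [[i|//]|//] _; rewrite /sharpL_formula !sharpL_letter.
  exact (D0_sharp (inV_letter i) (homog_wrd (erefl _)) hw hqw).
rewrite -cat1s wrd_cat wdeg_cat.
exact (sharpL_formulaM D0_linear D0_leibniz D0_hom linear_sharpL_l homog_sharpL
  sharpLM hqw (homog_wrd (erefl _)) (homog_wrd (erefl _)) base (IH Vs)).
Qed.

Lemma sharpR_formula_wrd v p s : inV v -> hom p v -> all (@isWl I J) s ->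
  sharpR_formula D0 sR v p (wrd s) (wdeg s).
Proof.
move=> hv hpv; elim: s => [_|l s IH /andP [Wl Ws]].
  rewrite wrd_nil wdeg_nil.
  exact (sharpR_formula1 homog1 D0_linear D0_leibniz linear_sharpR_r sharpR1 v p).
have base : sharpR_formula D0 sR v p (wrd [:: l]) (wdeg [:: l]).
  case: l Wl => [[//|j]|//] _; rewrite /sharpR_formula -(sharpR_letter (D0 v)).
  exact (D0_sharp hv hpv (inW_letter j) (homog_wrd (erefl _))).
rewrite -cat1s wrd_cat wdeg_cat.
exact (sharpR_formulaM D0_linear D0_leibniz D0_hom linear_sharpR_r homog_sharpR
  sharpRM hpv (homog_wrd (erefl _)) (homog_wrd (erefl _)) base (IH Ws)).
Qed.

Lemma sharpL_formula_TV p q a w : inTV a -> hom p a -> inW w -> hom q w ->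
  D0 (sL a w) = a * w - sgn (p * q) *: (w * a) - sL (D0 a) w - sgn p *: sL a (D0 w).
Proof.
move=> ha hpa hw hqw.
apply: (linear_wrd_eq (F := fun a => D0 (sL a w))
  (G := fun a => a * w - sgn (p * q) *: (w * a) - sL (D0 a) w - sgn p *: sL a (D0 w))
  (P := fun s => (wdeg s == p) && all (@isVl I J) s)).
- exact: linear_comp D0_linear (linear_sharpL_l w).
- apply: linear_sub (linear_scale _ (linear_sharpL_l _)).
  apply: linear_sub (linear_comp (linear_sharpL_l w) D0_linear).
  exact: linear_sub (linear_mull w) (linear_scale _ (linear_mulr w)).
- by move=> s /andP [/eqP <- Vs]; exact (sharpL_formula_wrd hw hqw Vs).
- by move=> m; rewrite negb_and => /orP [/hpa|/ha].
Qed.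

Lemma sharpR_formula_TW p q v b : inV v -> hom p v -> inTW b -> hom q b ->
  D0 (sR v b) = v * b - sgn (p * q) *: (b * v) - sR (D0 v) b - sgn p *: sR v (D0 b).
Proof.
move=> hv hpv hb hqb.
apply: (linear_wrd_eq (F := fun b => D0 (sR v b))
  (G := fun b => v * b - sgn (p * q) *: (b * v) - sR (D0 v) b - sgn p *: sR v (D0 b))
  (P := fun s => (wdeg s == q) && all (@isWl I J) s)).
- exact: linear_comp D0_linear (linear_sharpR_r v).
- apply: linear_sub (linear_scale _ (linear_comp (linear_sharpR_r v) D0_linear)).
  apply: linear_sub (linear_sharpR_r _).
  exact: linear_sub (linear_mulr v) (linear_scale _ (linear_mull v)).
- by move=> s /andP [/eqP <- Ws]; exact (sharpR_formula_wrd hv hpv Ws).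
- by move=> m; rewrite negb_and => /orP [/hqb|/hb].
Qed.

End DerivationOnSharp.

End TensorAlgebra.

Theorem lemma6p7 (K : fieldType) (I J : choiceType)
    (degV : I -> int) (degW : J -> int)
    (dV dW D0 : tens K I J -> tens K I J) :
  is_deriv1_on degV degW (@inTV K I J) dV ->
  is_deriv1_on degV degW (@inTW K I J) dW ->
  is_deriv1 degV degW D0 ->
  (forall v, inV v -> D0 v = dV v) ->
  (forall w, inW w -> D0 w = dW w) ->
  (forall (p q : int) (v w : tens K I J),
      inV v -> homog degV degW p v -> inW w -> homog degV degW q w ->
      D0 (sharpR degV degW v w) =
        v * w - sgn K (p * q) *: (w * v)
        - sharpL degV degW (D0 v) w - sgn K p *: sharpR degV degW v (D0 w)) ->
  (forall (p q : int) (a w : tens K I J),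
    inTV a -> homog degV degW p a -> inW w -> homog degV degW q w ->
    D0 (sharpL degV degW a w) =
      a * w - sgn K (p * q) *: (w * a)
      - sharpL degV degW (D0 a) w - sgn K p *: sharpL degV degW a (D0 w))
  /\
  (forall (p q : int) (v b : tens K I J),
    inV v -> homog degV degW p v -> inTW b -> homog degV degW q b ->
    D0 (sharpR degV degW v b) =
      v * b - sgn K (p * q) *: (b * v)
      - sharpR degV degW (D0 v) b - sgn K p *: sharpR degV degW v (D0 b)).
Proof.
move=> _ _ [D0_linear D0_leibniz D0_hom] _ _ D0_sharp; split.
- exact: sharpL_formula_TV D0_linear D0_leibniz D0_hom D0_sharp.
- exact: sharpR_formula_TW D0_linear D0_leibniz D0_hom D0_sharp.
Qed.
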